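(* Let $n\ge1$ and let $\phi,\psi$ be characters of $S_n$. Then $d_\phi^{S_n}(A)=d_\psi^{S_n}(A)$ for every $A\in\mathbb S_n(\mathbb C)$ if and only if $\phi=\psi$.
   Context: A character of a group $G\le S_n$ is a function $g\mapsto\operatorname{tr}(\rho(g))$ for some homomorphism $\rho:G\to GL_m(\mathbb C)$, $m\ge1$. $\mathbb S_n(\mathbb C)$ is the set of complex symmetric $n\times n$ matrices. For $\chi:S_n\to\mathbb C$, $d_\chi^{S_n}(A)=\sum_{\sigma\in S_n}\chi(\sigma)\prod_{i=1}^n A_{i\,\sigma(i)}$. *)

From HB Require Import structures.
From mathcomp Require Import all_boot all_order all_algebra all_fingroup.
From mathcomp Require Import mxrepresentation.
Set Implicit Arguments. Unset Strict Implicit. Unset Printing Implicit Defensive.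
Import GRing.Theory Num.Theory.
Local Open Scope ring_scope.

Definition is_Sn_character (C : numClosedFieldType) (n : nat)
    (chi : {perm 'I_n} -> C) : Prop :=
  exists (m : nat) (rG : mx_representation C [set: {perm 'I_n}]%G m.+1),
    forall s : {perm 'I_n}, chi s = \tr (rG s).

Definition dSn (C : numClosedFieldType) (n : nat)
    (chi : {perm 'I_n} -> C) (A : 'M[C]_n) : C :=
  \sum_(s : {perm 'I_n}) chi s * \prod_(i < n) A i (s i).

From HB Require Import structures.
From mathcomp Require Import all_boot all_order all_algebra all_fingroup.
From mathcomp Require Import mxrepresentation.
Set Implicit Arguments. Unset Strict Implicit. Unset Printing Implicit Defensive.
Import GRing.Theory Num.Theory.

(* Characters are class functions, and two permutations whose undirected
   functional graphs {x, s x} coincide have the same cycles, hence are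
   conjugate. Evaluating d_chi at the symmetric 0/1 adjacency matrix of the
   graph of s gives the sum of chi over all t whose graph is contained in that
   of s. So if d_phi and d_psi agree on symmetric matrices, Moebius inversion
   over inclusion of graphs shows that phi - psi sums to zero over each class
   {t | graph t = graph s}; as phi - psi is constant on that nonempty class,
   phi = psi. *)

Section SameCyclesConjugate.
Variable T : finType.
Implicit Types s t : {perm T}.

Definition cycle_base s x := odflt x [pick y in porbit s x].

Lemma cycle_base_porbit s x : cycle_base s x \in porbit s x.
Proof.
by rewrite /cycle_base; case: pickP => [y ->|/(_ x)]; rewrite ?porbit_id.
Qed.

Lemma eq_cycle_base s t x y :
  porbit s x = porbit t y -> cycle_base s x = cycle_base t y.
Proof.
rewrite /cycle_base => E; rewrite E; case: pickP => // nyP.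
by have := nyP y; rewrite porbit_id.
Qed.

Lemma porbit_cycle_base s x : porbit s (cycle_base s x) = porbit s x.
Proof. by apply/eqP; rewrite eq_porbit_mem cycle_base_porbit. Qed.

Lemma porbit_iter s j x : porbit s (iter j s x) = porbit s x.
Proof. by rewrite -permX porbit_perm. Qed.

Lemma iter_mod_porbit s j x : iter j s x = iter (j %% #|porbit s x|) s x.
Proof.
rewrite {1}(divn_eq j #|porbit s x|) addnC iterD; congr (iter _ _ _).
by elim: (j %/ _) => //= q IHq; rewrite mulSn iterD IHq iter_porbit.
Qed.

Lemma iter_porbit_inj s x i j :
  i < #|porbit s x| -> j < #|porbit s x| -> iter i s x = iter j s x -> i = j.
Proof.
move=> ltik ltjk eq_ij; apply/eqP.
rewrite -(nth_uniq x (s := traject s x #|porbit s x|)) ?size_traject //.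
  by rewrite !nth_traject // eq_ij.
exact: uniq_traject_porbit.
Qed.

Definition cycle_index s x :=
  index x (traject s (cycle_base s x) #|porbit s x|).

Lemma cycle_indexP s x :
  cycle_index s x < #|porbit s x| /\
  iter (cycle_index s x) s (cycle_base s x) = x.
Proof.
have x_traj : x \in traject s (cycle_base s x) #|porbit s x|.
  by rewrite -porbit_cycle_base -porbit_traject porbit_cycle_base porbit_id.
have lt_ik : cycle_index s x < #|porbit s x|.
  by rewrite -[X in _ < X](size_traject s (cycle_base s x)) index_mem.
by split; rewrite // -(nth_traject _ lt_ik) nth_index.
Qed.

Lemma cycle_index_iter s j x :
  cycle_index s (iter j s (cycle_base s x)) = j %% #|porbit s x|.
Proof.
set y := iter j s _; have Ey : porbit s y = porbit s x.
  by rewrite porbit_iter porbit_cycle_base.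
have [lt_yk yE] := cycle_indexP s y.
rewrite Ey (eq_cycle_base Ey) in lt_yk yE.
apply: (@iter_porbit_inj s (cycle_base s x)); rewrite ?porbit_cycle_base //.
  by rewrite ltn_pmod // lt0n card_porbit_neq0.
by rewrite yE /y (iter_mod_porbit s) porbit_cycle_base.
Qed.

(* Maps the [s]-cycle of [x] onto the [t]-cycle with the same support, matching
   base points; it conjugates [s] into [t]. *)
Definition cycle_transport s t x := iter (cycle_index s x) t (cycle_base s x).

Lemma cycle_transport_iter s t j x :
    (forall y, porbit t y = porbit s y) ->
  cycle_transport s t (iter j s (cycle_base s x)) = iter j t (cycle_base s x).
Proof.
move=> same_cycles.
have Eb : porbit s (iter j s (cycle_base s x)) = porbit s x.
  by rewrite porbit_iter porbit_cycle_base.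
rewrite /cycle_transport cycle_index_iter (eq_cycle_base Eb).
by rewrite [RHS](iter_mod_porbit t) same_cycles porbit_cycle_base.
Qed.

Variables s t : {perm T}.
Hypothesis same_cycles : forall x, porbit t x = porbit s x.

Lemma cycle_transport_comm x :
  cycle_transport s t (s x) = t (cycle_transport s t x).
Proof.
have [_ xE] := cycle_indexP s x.
by rewrite -{1}xE -iterS cycle_transport_iter.
Qed.

Lemma cycle_transportK : cancel (cycle_transport s t) (cycle_transport t s).
Proof.
move=> x; have [_ xE] := cycle_indexP s x.
have same_base : cycle_base s x = cycle_base t x by apply: eq_cycle_base.
rewrite [cycle_transport s t x]/cycle_transport same_base.
by rewrite cycle_transport_iter -?same_base // => y; rewrite same_cycles.
Qed.

Lemma conjg_same_porbits : exists g : {perm T}, t = (s ^ g)%g.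
Proof.
pose g := perm (can_inj cycle_transportK).
have gE : g =1 cycle_transport s t by apply: permE.
exists g; apply/permP => x.
by rewrite /conjg !permM gE cycle_transport_comm -gE permKV.
Qed.

End SameCyclesConjugate.

Section PermGraph.
Variable T : finType.
Implicit Types s t : {perm T}.

Definition perm_graph s := [set p : T * T | (s p.1 == p.2) || (s p.2 == p.1)].

Lemma perm_graph_sym s x y :
  ((x, y) \in perm_graph s) = ((y, x) \in perm_graph s).
Proof. by rewrite !inE orbC. Qed.

Lemma perm_graph_subP s t :
  reflect (forall x, (x, t x) \in perm_graph s)
          (perm_graph t \subset perm_graph s).
Proof.
apply: (iffP subsetP) => [sub_ts x | t_s [x y]].
  by rewrite sub_ts ?inE ?eqxx.
by rewrite inE /= => /orP[] /eqP <-; rewrite // perm_graph_sym.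
Qed.

Lemma perm_graph_porbit_sub s t :
  perm_graph t \subset perm_graph s -> forall x, porbit t x \subset porbit s x.
Proof.
move=> /perm_graph_subP t_s x; apply/subsetP => _ /porbitP[i ->]; rewrite permX.
have s_porbit y : s y \in porbit s y by have := mem_porbit s 1 y; rewrite expg1.
have step y : t y \in porbit s y.
  have := t_s y; rewrite inE /= => /orP[] /eqP sy.
    by rewrite -sy s_porbit.
  by rewrite porbit_sym -{1}sy.
elim: i => [|i IHi]; first exact: porbit_id.
have /eqP <- : porbit s (iter i t x) == porbit s x by rewrite eq_porbit_mem.
by rewrite iterS step.
Qed.

Lemma conjg_eq_perm_graph s t :
  perm_graph t = perm_graph s -> exists g, t = (s ^ g)%g.
Proof.
move=> eq_ts; apply: conjg_same_porbits => x.
by apply/eqP; rewrite eqEsubset !perm_graph_porbit_sub ?eq_ts.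
Qed.

End PermGraph.

Local Open Scope ring_scope.

Lemma sum_fiber_eq0 (I U : finType) (V : zmodType)
    (key : I -> {set U}) (F : I -> V) :
    (forall i, \sum_(j | key j \subset key i) F j = 0) ->
  forall i, \sum_(j | key j == key i) F j = 0.
Proof.
move=> sum_sub0 i; have [N] := ubnP #|key i|; elim: N i => // N IHN i.
rewrite ltnS => le_key_N.
have sum_proper0 (K : {set U}) :
    K \proper key i -> \sum_(j | key j == K) F j = 0.
  move=> ltK; have [j0 /eqP keyj0 | no_j] := pickP (fun j => key j == K).
    rewrite -keyj0 in ltK *.
    exact: IHN (leq_trans (proper_card ltK) le_key_N).
  by apply: big1 => j keyj; move: (no_j j); rewrite keyj.
rewrite -[RHS](sum_sub0 i) [RHS](bigID (fun j => key j \proper key i)) /=.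
rewrite [X in X + _](partition_big key (fun K => K \proper key i)); last first.
  by move=> j /andP[].
rewrite [X in X + _]big1 ?add0r => [|K ltK]; last first.
  rewrite -[RHS](sum_proper0 K ltK); apply: eq_bigl => j.
  by case: eqP => [->|]; rewrite ?andbF // ltK proper_sub.
apply: eq_bigl => j; rewrite properEneq negb_and negbK andb_orr andbN orbF.
by case: eqP => [->|_]; rewrite ?subxx ?andbF.
Qed.

Lemma mxtrace_repr_conjg (F : fieldType) (gT : finGroupType) (G : {group gT}) n
    (rG : mx_representation F G n) :
  {in G &, forall x y, \tr (rG (x ^ y)%g) = \tr (rG x)}.
Proof.
move=> x y Gx Gy; rewrite /conjg !repr_mxM ?groupM ?groupV //.
by rewrite mxtrace_mulC -mulmxA -repr_mxM ?groupV // mulgV repr_mx1 mulmx1.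
Qed.

Lemma Sn_character_conjg (C : numClosedFieldType) n (chi : {perm 'I_n} -> C) :
  is_Sn_character chi -> forall s g, chi (s ^ g)%g = chi s.
Proof. by move=> [m [rG chiE]] s g; rewrite !chiE mxtrace_repr_conjg ?inE. Qed.

Definition perm_graph_mx (R : pzSemiRingType) n (s : {perm 'I_n}) : 'M[R]_n :=
  \matrix_(i, j) ((i, j) \in perm_graph s)%:R.

Lemma tr_perm_graph_mx (R : pzSemiRingType) n (s : {perm 'I_n}) :
  (perm_graph_mx R s)^T = perm_graph_mx R s.
Proof. by apply/matrixP => i j; rewrite !mxE perm_graph_sym. Qed.

Lemma prod_perm_graph_mx (R : comPzSemiRingType) n (s t : {perm 'I_n}) :
  \prod_i perm_graph_mx R s i (t i) = (perm_graph t \subset perm_graph s)%:R.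
Proof.
case: perm_graph_subP => [t_s | not_t_s].
  by apply: big1 => i _; rewrite mxE t_s.
have [i /negbTE t_i_s] : exists i, (i, t i) \notin perm_graph s.
  apply/existsP; rewrite -negb_forall.
  by apply: contra_notN not_t_s => /forallP.
by rewrite (bigD1 i) //= mxE t_i_s mul0r.
Qed.

Lemma dSn_perm_graph_mx (C : numClosedFieldType) n (chi : {perm 'I_n} -> C) s :
  dSn chi (perm_graph_mx C s) =
  \sum_(t | perm_graph t \subset perm_graph s) chi t.
Proof.
rewrite /dSn [RHS]big_mkcond; apply: eq_bigr => t _.
by rewrite prod_perm_graph_mx; case: ifP; rewrite ?mulr1 ?mulr0.
Qed.

Theorem mainTheorem9 (C : numClosedFieldType) (n : nat) (hn : (0 < n)%N)
    (phi psi : {perm 'I_n} -> C) :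
  is_Sn_character phi -> is_Sn_character psi ->
  ((forall A : 'M[C]_n, A^T = A -> dSn phi A = dSn psi A) <-> phi =1 psi).
Proof.
move=> phi_char psi_char; split=> [eq_d s | eq_phi_psi A _]; last first.
  by apply: eq_bigr => s _; rewrite eq_phi_psi.
pose F t := phi t - psi t.
have sum_sub_F t : \sum_(u | perm_graph u \subset perm_graph t) F u = 0.
  by rewrite sumrB -!dSn_perm_graph_mx eq_d ?subrr ?tr_perm_graph_mx.
have F_const t : perm_graph t == perm_graph s -> F t = F s.
  by move=> /eqP/conjg_eq_perm_graph[g ->]; rewrite /F !Sn_character_conjg.
have := sum_fiber_eq0 sum_sub_F s; rewrite (eq_bigr _ F_const) sumr_const.
move=> /eqP; rewrite mulrn_eq0 subr_eq0 eqn0Ngt => /orP[|/eqP //].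
by case/negP; apply/card_gt0P; exists s; apply: eqxx.
Qed.
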